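(* For every integer $n\ge 2$ there exist a finite alphabet $\Sigma_n$ and an $n$-state 1gQFA $Q_n$ over $\Sigma_n$ such that, taking strict cutpoint $1/2$, every one-way PFA $P$ over $\Sigma_n$ for which there is a strict cutpoint $\mu\in[0,1)$ with $L(P,\mu)=L(Q_n,1/2)$ has at least $n^2-1$ states.
   Context: Let $\Sigma$ be a finite alphabet and $\Sigma^\ast$ the set of finite words over it. Probabilistic computations are written with row vectors; stochastic matrices act on the right. A one-way PFA (probabilistic finite automaton, end-marker model) over $\Sigma$ is a tuple $P=(S,\Sigma,\pi,\{P_\sigma\}_{\sigma\in\Sigma},P_{\#},F)$, where $S$ is a finite state set (its number of states is $|S|$), $\pi$ is an initial probability distribution (row vector) on $S$, each $P_\sigma$ and $P_\#$ are row-stochastic $|S|\times|S|$ matrices, and $F\subseteq S$. For $w=\sigma_1\cdots\sigma_m$, $f_P(w)=\pi P_{\sigma_1}\cdots P_{\sigma_m}P_\#\mathbf 1_F$, where $\mathbf 1_F$ is the indicator column vector of $F$. For $\mu\in[0,1)$, $L(P,\mu)=\{w\in\Sigma^\ast: f_P(w)>\mu\}$. An $n$-state 1gQFA (measure-once one-way general quantum finite automaton) over $\Sigma$ is a tuple $Q=(\mathcal H,\Sigma,\rho_0,\{\mathcal E_\sigma\}_{\sigma\in\Sigma},P_{\mathrm{acc}})$ where $\mathcal H\cong\mathbb C^n$, $\rho_0$ is a density operator on $\mathcal H$, each $\mathcal E_\sigma$ is a completely positive trace-preserving map on the operators on $\mathcal H$, and $P_{\mathrm{acc}}$ is an orthogonal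 projector on $\mathcal H$. For $w=\sigma_1\cdots\sigma_m$, $\rho_w=\mathcal E_{\sigma_m}\circ\cdots\circ\mathcal E_{\sigma_1}(\rho_0)$ and $f_Q(w)=\operatorname{Tr}(P_{\mathrm{acc}}\rho_w)$. For $\lambda\in[0,1)$, $L(Q,\lambda)=\{w\in\Sigma^\ast: f_Q(w)>\lambda\}$. *)

From Stdlib Require Import Reals.
From HB Require Import structures.
From mathcomp Require Import all_boot all_order all_algebra.
From mathcomp Require Import complex.
From mathcomp Require Import Rstruct.
Set Implicit Arguments. Unset Strict Implicit. Unset Printing Implicit Defensive.
Import Order.TTheory GRing.Theory Num.Theory.
Local Open Scope ring_scope.

Notation C := (complex R).

Definition stochastic_row (k : nat) (v : 'rV[R]_k) : Prop :=
  (forall j, 0 <= v 0 j) /\ \sum_j v 0 j = 1.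

Definition row_stochastic (k : nat) (M : 'M[R]_k) : Prop :=
  (forall i j, 0 <= M i j) /\ (forall i, \sum_j M i j = 1).

Record PFA (S : finType) (k : nat) := MkPFA {
  pfa_init : 'rV[R]_k;
  pfa_trans : S -> 'M[R]_k;
  pfa_end : 'M[R]_k;
  pfa_final : {set 'I_k}
}.

Definition is_PFA (S : finType) (k : nat) (P : PFA S k) : Prop :=
  stochastic_row (pfa_init P) /\
  (forall s, row_stochastic (pfa_trans P s)) /\
  row_stochastic (pfa_end P).

Definition indicator_col (k : nat) (F : {set 'I_k}) : 'cV[R]_k :=
  \col_i (if i \in F then 1 else 0).

Definition pfa_prob (S : finType) (k : nat) (P : PFA S k) (w : seq S) : R :=
  ((foldl (fun v s => v *m pfa_trans P s) (pfa_init P) w)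
     *m pfa_end P *m indicator_col (pfa_final P)) 0 0.

Definition pfa_lang (S : finType) (k : nat) (P : PFA S k) (mu : R) : pred (seq S) :=
  fun w => mu < pfa_prob P w.

Definition adjmx (m n : nat) (A : 'M[C]_(m, n)) : 'M[C]_(n, m) :=
  (map_mx Num.conj A)^T.

Definition hermitian (n : nat) (A : 'M[C]_n) : Prop := adjmx A = A.

Definition psd (n : nat) (A : 'M[C]_n) : Prop :=
  hermitian A /\ forall v : 'cV[C]_n, 0 <= (adjmx v *m A *m v) 0 0.

Definition density (n : nat) (rho : 'M[C]_n) : Prop :=
  psd rho /\ \tr rho = 1.

Definition projector (n : nat) (P : 'M[C]_n) : Prop :=
  hermitian P /\ P *m P = P.

Definition kraus_apply (n : nat) (Ks : seq 'M[C]_n) (rho : 'M[C]_n) : 'M[C]_n :=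
  \sum_(K <- Ks) (K *m rho *m adjmx K).

(* By the Choi-Kraus theorem,
   the maps kraus_apply Ks with this property are exactly the completely
   positive trace-preserving maps on operators on C^n. *)
Definition kraus_TP (n : nat) (Ks : seq 'M[C]_n) : Prop :=
  \sum_(K <- Ks) (adjmx K *m K) = 1%:M.

Record QFA (S : finType) (n : nat) := MkQFA {
  qfa_init : 'M[C]_n;
  qfa_ops : S -> seq 'M[C]_n;
  qfa_acc : 'M[C]_n
}.

Definition is_1gQFA (S : finType) (n : nat) (Q : QFA S n) : Prop :=
  density (qfa_init Q) /\
  (forall s, kraus_TP (qfa_ops Q s)) /\
  projector (qfa_acc Q).

Definition qfa_state (S : finType) (n : nat) (Q : QFA S n) (w : seq S) : 'M[C]_n :=
  foldl (fun rho s => kraus_apply (qfa_ops Q s) rho) (qfa_init Q) w.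

Definition qfa_prob (S : finType) (n : nat) (Q : QFA S n) (w : seq S) : C :=
  \tr (qfa_acc Q *m qfa_state Q w).

Definition qfa_lang (S : finType) (n : nat) (Q : QFA S n) (lambda : C) : pred (seq S) :=
  fun w => lambda < qfa_prob Q w.

From Pilot Require Import Defs.
From Stdlib Require Import Reals.
From HB Require Import structures.
From mathcomp Require Import all_boot all_order all_algebra.
From mathcomp Require Import complex.
From mathcomp Require Import Rstruct.
From mathcomp Require Import ring lra.
Import Order.TTheory GRing.Theory Num.Theory.
Set Implicit Arguments. Unset Strict Implicit. Unset Printing Implicit Defensive.
Local Open Scope ring_scope.

(* Let the letter x = (p, q) prepare the pure state psi_x (e_p if p = q, else
   (e_p + e_q)/sqrt 2 or (e_q + i e_p)/sqrt 2 according as p < q or p > q), and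
   let the letter T, a set of such pairs, perform the two-outcome measurement
   {1/2 + d H_T, 1/2 - d H_T}, where H_T is Hermitian with
   <psi_x, H_T psi_x> = 1 or -1 according as x is in T or not.  Then the word
   x T is accepted with probability 1/2 + d or 1/2 - d, i.e. above the cutpoint
   1/2 exactly when x is in T.  If a k-state PFA with cutpoint mu has the same
   language, the vectors v_x = pi P_x and u_T = P_T P_# 1_F - mu 1 of R^k satisfy
   v_x . u_T > 0 <-> x in T for all n^2 letters x and all sets T.  Taking
   T = {x | a_x > 0} shows that every linear relation sum_x a_x v_x = 0 is
   trivial, so k >= n^2. *)

(** * Sign patterns *)

Section SignPatterns.
Variables (F : realFieldType) (k : nat) (X : finType).
Variables (v : X -> 'rV[F]_k) (u : {set X} -> 'cV[F]_k).
Hypothesis sign_pattern : forall T x, (0 < (v x *m u T) 0 0) = (x \in T).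

Let V : 'M[F]_(#|X|, k) := \matrix_i v (enum_val i).

Lemma sign_pattern_kernel_nonpos (a : 'rV[F]_#|X|) :
  a *m V = 0 -> forall i, a 0 i <= 0.
Proof.
move=> aV0; pose T := [set x | 0 < a 0 (enum_rank x)].
have term_ge0 i : 0 <= a 0 i * (v (enum_val i) *m u T) 0 0.
  have := sign_pattern T (enum_val i); rewrite inE enum_valK.
  have [ai_gt0 /ltW|ai_le0 /negbT] := ltrP 0 (a 0 i); first exact: mulr_ge0 (ltW ai_gt0).
  by rewrite -leNgt; exact: mulr_le0.
have sum0 : \sum_i a 0 i * (v (enum_val i) *m u T) 0 0 = 0.
  transitivity ((a *m V *m u T) 0 0); last by rewrite aV0 mul0mx mxE.
  rewrite -mulmxA mxE; apply: eq_bigr => i _; congr (_ * _).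
  by rewrite !mxE; apply: eq_bigr => j _; rewrite mxE.
move=> i; rewrite leNgt; apply/negP => ai_gt0.
have := sign_pattern T (enum_val i); rewrite inE enum_valK ai_gt0.
have /eqP := @psumr_eq0P _ _ _ _ (fun j _ => term_ge0 j) sum0 i isT.
by rewrite mulf_eq0 gt_eqF //= => /eqP ->; rewrite ltxx.
Qed.

Lemma sign_pattern_card_leq : (#|X| <= k)%N.
Proof.
have V_free : row_free V.
  apply: inj_row_free => a aV0; apply/rowP => i; rewrite mxE; apply/eqP.
  rewrite eq_le sign_pattern_kernel_nonpos //=.
  have := @sign_pattern_kernel_nonpos (- a) _ i; rewrite mxE oppr_le0; apply.
  by rewrite mulNmx aV0 oppr0.
by rewrite -(eqP V_free) rank_leq_col.
Qed.
End SignPatterns.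

Lemma stochastic_row_mulmx (k : nat) (v : 'rV[R]_k) (M : 'M[R]_k) :
  stochastic_row v -> row_stochastic M -> stochastic_row (v *m M).
Proof.
move=> [v_ge0 v_sum1] [M_ge0 M_sum1]; split=> [j|].
  by rewrite mxE; apply: sumr_ge0 => i _; apply: mulr_ge0.
under eq_bigr => j _ do rewrite mxE.
rewrite exchange_big /= -[RHS]v_sum1; apply: eq_bigr => i _.
by rewrite -mulr_sumr M_sum1 mulr1.
Qed.

Lemma stochastic_row_mulmx_const (k : nat) (v : 'rV[R]_k) (c : R) :
  stochastic_row v -> (v *m (const_mx c : 'cV_k)) 0 0 = c.
Proof.
move=> [_ v_sum1]; rewrite mxE; under eq_bigr => j _ do rewrite mxE.
by rewrite -mulr_suml v_sum1 mul1r.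
Qed.

Lemma pfa_prob_pair (S : finType) (k : nat) (P : PFA S k) (a b : S) :
  pfa_prob P [:: a; b] =
  (pfa_init P *m pfa_trans P a *m
    (pfa_trans P b *m pfa_end P *m indicator_col (pfa_final P))) 0 0.
Proof. by rewrite /pfa_prob /= !mulmxA. Qed.

Lemma pfa_pair_separation_card_leq (S X : finType) (k : nat) (P : PFA S k) (mu : R)
    (a : X -> S) (b : {set X} -> S) :
  is_PFA P -> (forall T x, pfa_lang P mu [:: a x; b T] = (x \in T)) -> (#|X| <= k)%N.
Proof.
move=> [init_stoch [trans_stoch _]] separates.
apply: (@sign_pattern_card_leq _ _ _ (fun x => pfa_init P *m pfa_trans P (a x))
  (fun T => pfa_trans P (b T) *m pfa_end P *m indicator_col (pfa_final P) - const_mx mu)).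
move=> T x; rewrite mulmxBr mxE [in X in _ + X]mxE stochastic_row_mulmx_const; last first.
  exact: stochastic_row_mulmx.
by rewrite subr_gt0 -separates /pfa_lang pfa_prob_pair.
Qed.

(** * Pure states and Kraus operators *)

Section Adjoint.
Variable C : numClosedFieldType.

(* [adjmx] of Defs over an arbitrary numClosedFieldType; at [complex R] the two
   are convertible. *)
Definition adj_mx (p q : nat) (A : 'M[C]_(p, q)) : 'M[C]_(q, p) := (map_mx Num.conj A)^T.

Lemma adj_mx_mul (p q r : nat) (A : 'M[C]_(p, q)) (B : 'M[C]_(q, r)) :
  adj_mx (A *m B) = adj_mx B *m adj_mx A.
Proof. by rewrite /adj_mx map_mxM trmx_mul. Qed.

Lemma adj_mxK (p q : nat) (A : 'M[C]_(p, q)) : adj_mx (adj_mx A) = A.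
Proof. by apply/matrixP => i j; rewrite !mxE conjCK. Qed.

Lemma adj_mxD (p q : nat) (A B : 'M[C]_(p, q)) : adj_mx (A + B) = adj_mx A + adj_mx B.
Proof. by apply/matrixP => i j; rewrite !mxE rmorphD. Qed.

Lemma adj_mxZ (p q : nat) (c : C) (A : 'M[C]_(p, q)) : adj_mx (c *: A) = c^* *: adj_mx A.
Proof. by apply/matrixP => i j; rewrite !mxE rmorphM. Qed.

Lemma outer_entry (n : nat) (x y : 'cV[C]_n) a b : (x *m adj_mx y) a b = x a 0 * (y b 0)^*.
Proof. by rewrite mxE big_ord1 !mxE. Qed.

Definition ket (n : nat) (a : 'I_n) : 'cV[C]_n := delta_mx a 0.

Lemma adj_ket (n : nat) (a : 'I_n) : adj_mx (ket a) = delta_mx 0 a.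
Proof. by apply/matrixP => i j; rewrite !mxE conjC_nat andbC. Qed.

Lemma ket_dot (n : nat) (a b : 'I_n) : adj_mx (ket a) *m ket b = (a == b)%:R%:M.
Proof.
rewrite adj_ket mul_delta_mx_cond; apply/matrixP => i j.
by rewrite !ord1; case: (a == b); rewrite !mxE.
Qed.

Lemma quad_ket (n : nat) (M : 'M[C]_n) a b : adj_mx (ket a) *m M *m ket b = (M a b)%:M.
Proof. by apply/matrixP => i j; rewrite !ord1 adj_ket -rowE -colE !mxE eqxx mulr1n. Qed.

Lemma sum_ket_outer (n : nat) : \sum_l ket l *m adj_mx (ket l) = 1%:M :> 'M[C]_n.
Proof. by rewrite mx1_sum_delta; apply: eq_bigr => l _; rewrite adj_ket mul_delta_mx. Qed.

Definition ket_proj (n : nat) (a : 'I_n) : 'M[C]_n := ket a *m adj_mx (ket a).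

Lemma adj_ket_proj (n : nat) (a : 'I_n) : adj_mx (ket_proj a) = ket_proj a.
Proof. by rewrite /ket_proj adj_mx_mul adj_mxK. Qed.

Lemma ket_proj_idem (n : nat) (a : 'I_n) : ket_proj a *m ket_proj a = ket_proj a.
Proof. by rewrite /ket_proj -mulmxA (mulmxA (adj_mx _)) ket_dot eqxx mul1mx. Qed.

Lemma ket_proj_trace (n : nat) (a : 'I_n) : \tr (ket_proj a) = 1.
Proof. by rewrite /ket_proj mxtrace_mulC ket_dot eqxx mxtrace_scalar. Qed.

Lemma ket_proj_psd (n : nat) (a : 'I_n) (v : 'cV[C]_n) :
  0 <= (adj_mx v *m ket_proj a *m v) 0 0.
Proof.
rewrite /ket_proj mulmxA -mulmxA.
have -> : adj_mx (ket a) *m v = adj_mx (adj_mx v *m ket a) by rewrite adj_mx_mul adj_mxK.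
by rewrite outer_entry mul_conjC_ge0.
Qed.

Lemma mxtrace_sum (n : nat) (I : Type) (r : seq I) (F : I -> 'M[C]_n) :
  \tr (\sum_(i <- r) F i) = \sum_(i <- r) \tr (F i).
Proof. exact: raddf_sum. Qed.

Section Preparation.
Variables (n : nat) (v : 'cV[C]_n).

Definition prepare_ops : seq 'M[C]_n := [seq v *m adj_mx (ket l) | l <- index_enum 'I_n].

Lemma prepare_ops_TP : adj_mx v *m v = 1%:M ->
  \sum_(K <- prepare_ops) adj_mx K *m K = 1%:M.
Proof.
move=> v_unit; rewrite big_map -sum_ket_outer; apply: eq_bigr => l _.
by rewrite adj_mx_mul adj_mxK -mulmxA (mulmxA (adj_mx v)) v_unit mul1mx.
Qed.

Lemma prepare_ops_apply (a : 'I_n) :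
  \sum_(K <- prepare_ops) K *m ket_proj a *m adj_mx K = v *m adj_mx v.
Proof.
rewrite big_map (bigD1 a) //= big1 => [|l la]; last first.
  rewrite /ket_proj adj_mx_mul adj_mxK !mulmxA -(mulmxA v) ket_dot (negbTE la).
  by rewrite mul_mx_scalar scale0r !mul0mx.
rewrite addr0 /ket_proj adj_mx_mul adj_mxK !mulmxA -(mulmxA v) ket_dot eqxx mulmx1.
by rewrite -(mulmxA v) ket_dot eqxx mulmx1.
Qed.

End Preparation.

Section Measurement.
Variables (n : nat) (I : finType) (a b : 'I_n) (zA zR : I -> 'cV[C]_n).

Definition measure_ops : seq 'M[C]_n :=
  [seq ket a *m adj_mx (zA i) | i <- index_enum I] ++
  [seq ket b *m adj_mx (zR i) | i <- index_enum I].

Lemma measure_ops_TP :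
  \sum_i zA i *m adj_mx (zA i) + \sum_i zR i *m adj_mx (zR i) = 1%:M ->
  \sum_(K <- measure_ops) adj_mx K *m K = 1%:M.
Proof.
move=> sum1; rewrite -sum1 big_cat !big_map.
by congr (_ + _); apply: eq_bigr => i _;
  rewrite adj_mx_mul adj_mxK -mulmxA (mulmxA (adj_mx _)) ket_dot eqxx mul1mx.
Qed.

Lemma tr_ket_proj_kraus (c : 'I_n) (z : 'cV[C]_n) (rho : 'M[C]_n) :
  \tr (ket_proj a *m (ket c *m adj_mx z *m rho *m adj_mx (ket c *m adj_mx z))) =
  (a == c)%:R * \tr (z *m adj_mx z *m rho).
Proof.
rewrite /ket_proj adj_mx_mul adj_mxK.
have -> : ket a *m adj_mx (ket a) *m (ket c *m adj_mx z *m rho *m (z *m adj_mx (ket c)))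
    = ket a *m (adj_mx (ket a) *m ket c) *m (adj_mx z *m rho *m z) *m adj_mx (ket c).
  by rewrite !mulmxA.
rewrite ket_dot mul_mx_scalar -!scalemxAl mxtraceZ.
case: eqP => [<-|_]; last by rewrite !mul0r.
rewrite mxtrace_mulC !mulmxA ket_dot eqxx mul_scalar_mx scale1r.
by rewrite (mxtrace_mulC (adj_mx z *m rho) z) mulmxA.
Qed.

Lemma measure_ops_accept (rho : 'M[C]_n) : a != b ->
  \tr (ket_proj a *m \sum_(K <- measure_ops) K *m rho *m adj_mx K) =
  \tr ((\sum_i zA i *m adj_mx (zA i)) *m rho).
Proof.
move=> ab; rewrite big_cat !big_map mulmxDr mxtraceD !mulmx_sumr !mxtrace_sum.
under eq_bigr => i _ do rewrite tr_ket_proj_kraus eqxx mul1r.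
under [X in _ + X]eq_bigr => i _ do rewrite tr_ket_proj_kraus (negbTE ab) mul0r.
by rewrite big1_eq addr0 -mxtrace_sum -mulmx_suml.
Qed.

End Measurement.

Lemma sqrtC_conj (x : C) : 0 <= x -> (sqrtC x)^* = sqrtC x.
Proof. by move=> x_ge0; rewrite conj_Creal // ger0_real // sqrtC_ge0. Qed.

Definition pair_state (n : nat) (g : C) (a b : 'I_n) : 'cV[C]_n :=
  sqrtC 2^-1 *: (ket a + g *: ket b).

Lemma quad_pair_state (n : nat) (M : 'M[C]_n) g a b :
  (adj_mx (pair_state g a b) *m M *m pair_state g a b) 0 0 =
  2^-1 * (M a a + g * M a b + g^* * M b a + g^* * g * M b b).
Proof.
rewrite /pair_state !adj_mxZ adj_mxD adj_mxZ sqrtC_conj ?invr_ge0 ?ler0n //.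
rewrite -!scalemxAl -scalemxAr !mulmxDl !mulmxDr -!scalemxAl -!scalemxAr.
by rewrite !quad_ket !mxE eqxx !mulr1n; ring: (sqrtCK (2^-1 : C)).
Qed.

Lemma pair_state_unit (n : nat) (g : C) (a b : 'I_n) :
  a != b -> g^* * g = 1 -> adj_mx (pair_state g a b) *m pair_state g a b = 1%:M.
Proof.
move=> ab gg; apply/matrixP => i j; rewrite !ord1 -(mulmx1 (adj_mx _)) quad_pair_state.
by rewrite !mxE !eqxx (negbTE ab) eq_sym (negbTE ab) gg /=; field.
Qed.

Definition letter_state (n : nat) (x : 'I_n * 'I_n) : 'cV[C]_n :=
  if x.1 == x.2 then ket x.1
  else if (x.1 < x.2)%N then pair_state 1 x.1 x.2
  else pair_state 'i x.2 x.1.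

Lemma letter_state_unit (n : nat) (x : 'I_n * 'I_n) :
  adj_mx (letter_state x) *m letter_state x = 1%:M.
Proof.
rewrite /letter_state; case: eqP => [_|x12]; first by rewrite ket_dot eqxx.
case: ltnP => _; apply: pair_state_unit.
- by apply/eqP.
- by rewrite conjC1 mulr1.
- by apply/eqP => x21; apply: x12.
- by rewrite conjCi mulNr -expr2 sqrCi opprK.
Qed.

End Adjoint.

Arguments ket {C n} a.
Arguments ket_proj {C n} a.
Arguments letter_state {C n} x.

(** * A tight frame of rank-one projectors *)

Lemma sum_delta (S : pzSemiRingType) (n : nat) (a : 'I_n) (G : 'I_n -> S) :
  \sum_p (a == p)%:R * G p = G a.
Proof.
rewrite (bigD1 a) //= eqxx mul1r big1 ?addr0 // => p /negbTE.
by rewrite eq_sym => ->; rewrite mul0r.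
Qed.

Lemma sum_delta2 (S : pzSemiRingType) (n m : nat) (a : 'I_n) (G : 'I_n -> 'I_m -> S) :
  \sum_p \sum_j (a == p)%:R * G p j = \sum_j G a j.
Proof.
rewrite -(sum_delta a (fun p => \sum_j G p j)).
by apply: eq_bigr => p _; rewrite mulr_sumr.
Qed.

Lemma big_ord4 (V : nmodType) (F : 'I_4 -> V) :
  \sum_k F k = F (Ordinal (isT : 0 < 4)%N) + F (Ordinal (isT : 1 < 4)%N)
               + F (Ordinal (isT : 2 < 4)%N) + F (Ordinal (isT : 3 < 4)%N).
Proof.
rewrite !big_ord_recl big_ord0 addr0 !addrA.
by congr (_ + _ + _ + _); congr F; apply: val_inj.
Qed.

Section Frame.
Variables (K : rcfType) (n : nat).
Local Notation C := (complex K).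

Definition phase (k : 'I_4) : C := nth 0 [:: 1; 'i; -1; - 'i] k.

Lemma phase_conj k : phase k * (phase k)^* = 1.
Proof.
by rewrite -normCK; case: k => [[|[|[|[|//]]]] ?];
  rewrite /phase /= ?normrN ?normr1 ?normCi expr1n.
Qed.

Definition frame_vec (i : 'I_n * 'I_n * 'I_4) : 'cV[C]_n :=
  ket i.1.1 + phase i.2 *: ket i.1.2.

Definition frame_op (w : 'I_n -> 'I_n -> 'I_4 -> K) : 'M[C]_n :=
  \sum_i (w i.1.1 i.1.2 i.2)%:C%C *: (frame_vec i *m adj_mx (frame_vec i)).

Lemma sum_triple (V : nmodType) (F : 'I_n * 'I_n * 'I_4 -> V) :
  \sum_i F i = \sum_p \sum_q \sum_k F (p, q, k).
Proof.
rewrite (pair_bigA _ (fun p q => \sum_k F (p, q, k))) pair_bigA /=.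
by apply: eq_bigr => -[[p q] k].
Qed.

Lemma mulr_sum2r (c : C) (G : 'I_n -> 'I_4 -> C) :
  c * \sum_q \sum_k G q k = \sum_q \sum_k c * G q k.
Proof. by rewrite mulr_sumr; apply: eq_bigr => q _; rewrite mulr_sumr. Qed.

Lemma sum_delta3 (a : 'I_n) (G : 'I_n -> 'I_n -> 'I_4 -> C) :
  \sum_p \sum_q \sum_k (a == p)%:R * G p q k = \sum_q \sum_k G a q k.
Proof.
rewrite -(sum_delta a (fun p => \sum_q \sum_k G p q k)).
by apply: eq_bigr => p _; rewrite mulr_sum2r.
Qed.

Lemma sum_delta3_mid (a : 'I_n) (G : 'I_n -> 'I_n -> 'I_4 -> C) :
  \sum_p \sum_q \sum_k (a == q)%:R * G p q k = \sum_p \sum_k G p a k.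
Proof. by apply: eq_bigr => p _; rewrite sum_delta2. Qed.

Lemma frame_op_entry w a b :
  frame_op w a b =
  (a == b)%:R * (\sum_q \sum_k (w a q k)%:C%C + \sum_p \sum_k (w p a k)%:C%C)
  + \sum_k (w a b k)%:C%C * (phase k)^* + \sum_k (w b a k)%:C%C * phase k.
Proof.
have term (i : 'I_n * 'I_n * 'I_4) :
    ((w i.1.1 i.1.2 i.2)%:C%C *: (frame_vec i *m adj_mx (frame_vec i))) a b =
    (a == i.1.1)%:R * ((b == i.1.1)%:R * (w i.1.1 i.1.2 i.2)%:C%C)
    + (a == i.1.1)%:R * ((b == i.1.2)%:R * ((w i.1.1 i.1.2 i.2)%:C%C * (phase i.2)^*))
    + (a == i.1.2)%:R * ((b == i.1.1)%:R * ((w i.1.1 i.1.2 i.2)%:C%C * phase i.2))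
    + (a == i.1.2)%:R * ((b == i.1.2)%:R * (w i.1.1 i.1.2 i.2)%:C%C).
  rewrite mxE outer_entry !mxE !andbT rmorphD rmorphM /= !conjC_nat.
  by ring: (phase_conj i.2).
rewrite summxE (eq_bigr _ (fun i _ => term i)) !big_split /= !sum_triple /=.
rewrite !sum_delta3 !sum_delta3_mid !sum_delta2 /= -!mulr_sum2r [b == a]eq_sym.
by rewrite mulrDr; ring.
Qed.

Lemma sum2_real_complex (G : 'I_n -> 'I_4 -> K) :
  \sum_q \sum_k (G q k)%:C%C = (\sum_q \sum_k G q k)%:C%C :> C.
Proof. by rewrite rmorph_sum; apply: eq_bigr => q _; rewrite rmorph_sum. Qed.

Lemma frame_op_const (c : K) : frame_op (fun _ _ _ => c) = ((8 * n)%:R * c)%:C%C%:M.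
Proof.
apply/matrixP => a b; rewrite frame_op_entry !big_ord4 !sumr_const !card_ord mxE.
rewrite /phase /= conjC1 conjCN1 conjCi rmorphN /= conjCi opprK rmorphM rmorph_nat.
ring.
Qed.

Lemma frame_opD w1 w2 :
  frame_op (fun p q k => w1 p q k + w2 p q k) = frame_op w1 + frame_op w2.
Proof. by rewrite -big_split; apply: eq_bigr => i _; rewrite rmorphD scalerDl. Qed.

Lemma frame_opZ c w : frame_op (fun p q k => c * w p q k) = c%:C%C *: frame_op w.
Proof. by rewrite scaler_sumr; apply: eq_bigr => i _; rewrite rmorphM scalerA. Qed.

Lemma frame_opN w : frame_op (fun p q k => - w p q k) = - frame_op w.
Proof. by rewrite -sumrN; apply: eq_bigr => i _; rewrite rmorphN scaleNr. Qed.

Definition centred (s : 'I_n -> 'I_n -> K) p q := s p q - (s p p + s q q) / 2.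

Lemma centred_complex s p q :
  (centred s p q)%:C%C = (s p q)%:C%C - ((s p p)%:C%C + (s q q)%:C%C) / 2 :> C.
Proof. by rewrite rmorphB rmorphM fmorphV rmorph_nat rmorphD. Qed.

(* Coordinates, in the frame, of the Hermitian matrix whose quadratic form at
   [letter_state (p, q)] is [s p q]. *)
Definition frame_coef (s : 'I_n -> 'I_n -> K) (p q : 'I_n) (k : 'I_4) :=
  let x := centred s p q in
  let y := centred s q p in
  if p == q then nth 0 [:: s p p / 4] k
  else if (p < q)%N then nth 0 [:: x; y; - x; - y] k / 2 else 0.

Lemma frame_coef_bound s p q k :
  (forall p q, -1 <= s p q <= 1) -> -1 <= frame_coef s p q k <= 1.
Proof.
move=> s_bound; rewrite /frame_coef /centred.
have /andP[? ?] := s_bound p p; have /andP[? ?] := s_bound q q.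
have /andP[? ?] := s_bound p q; have /andP[? ?] := s_bound q p.
case: k => [[|[|[|[|//]]]] ?] /=; case: eqP => _ /=; try case: ltnP => _ /=;
  apply/andP; split; lra.
Qed.

Lemma sum_frame_coef s p q : \sum_k frame_coef s p q k = (p == q)%:R * (s p p / 4).
Proof.
rewrite big_ord4 /frame_coef; case: (p =P q) => [_|_] /=.
  by rewrite mul1r !addr0.
by rewrite mul0r; case: ltnP => _; [ring | rewrite !addr0].
Qed.

Lemma frame_op_coef_diag s a : frame_op (frame_coef s) a a = (s a a)%:C%C.
Proof.
rewrite frame_op_entry eqxx mul1r.
have row_sum : \sum_q \sum_k frame_coef s a q k = s a a / 4.
  by under eq_bigr => q _ do rewrite sum_frame_coef; exact: sum_delta.
have col_sum : \sum_p \sum_k frame_coef s p a k = s a a / 4.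
  by under eq_bigr => p _ do rewrite sum_frame_coef eq_sym; exact: sum_delta.
rewrite !sum2_real_complex row_sum col_sum !big_ord4 /frame_coef /phase eqxx /=.
rewrite rmorph0 !mul0r !addr0 conjC1 !mulr1 -!rmorphD.
by congr (real_complex _ _); field.
Qed.

Lemma frame_op_coef_lt s (a b : 'I_n) : (a < b)%N ->
  frame_op (frame_coef s) a b = (centred s a b)%:C%C - 'i * (centred s b a)%:C%C /\
  frame_op (frame_coef s) b a = (centred s a b)%:C%C + 'i * (centred s b a)%:C%C.
Proof.
move=> ab; have [ab' ba'] : a != b /\ b != a by rewrite !neq_ltn ab orbT.
rewrite !frame_op_entry !big_ord4 /frame_coef (negbTE ab') (negbTE ba') ab.
rewrite ltnNge (ltnW ab) /=.
rewrite !mul0r !add0r /phase /= conjC1 conjCN1 conjCi rmorphN /= conjCi opprK.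
rewrite !rmorphM !rmorphN fmorphV rmorph_nat.
by split; field.
Qed.

Lemma quad_letter_state (s : 'I_n -> 'I_n -> K) (x : 'I_n * 'I_n) :
  (adj_mx (letter_state x) *m frame_op (frame_coef s) *m letter_state x) 0 0
  = (s x.1 x.2)%:C%C.
Proof.
rewrite /letter_state; case: eqP => [<-|x12].
  by rewrite quad_ket mxE eqxx mulr1n frame_op_coef_diag.
case: ltnP => [x_lt|x_ge]; rewrite quad_pair_state !frame_op_coef_diag.
  have [-> ->] := frame_op_coef_lt s x_lt.
  by rewrite !centred_complex conjC1; field.
have x_gt : (x.2 < x.1)%N by rewrite ltn_neqAle x_ge andbT; apply/eqP => /val_inj/esym.
have [-> ->] := frame_op_coef_lt s x_gt.
by rewrite !centred_complex conjCi; field: (sqrCi (complex K)).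
Qed.

Definition scaled_frame (w : 'I_n -> 'I_n -> 'I_4 -> K) i : 'cV[C]_n :=
  sqrtC (w i.1.1 i.1.2 i.2)%:C%C *: frame_vec i.

Lemma sum_scaled_frame w : (forall p q k, 0 <= w p q k) ->
  \sum_i scaled_frame w i *m adj_mx (scaled_frame w i) = frame_op w.
Proof.
move=> w_ge0; apply: eq_bigr => i _.
rewrite /scaled_frame adj_mxZ sqrtC_conj ?ler0c // -scalemxAl -scalemxAr scalerA.
by rewrite -expr2 sqrtCK.
Qed.

Definition signed_indicator (T : {set 'I_n * 'I_n}) p q : K :=
  if (p, q) \in T then 1 else -1.

(* The POVM {1/2 + d H, 1/2 - d H} with d = 1/(16 n), H = frame_op (frame_coef s),
   written as nonnegative combinations of frame projectors so that its Kraus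
   operators need no matrix square roots. *)
Definition accept_weight s p q k : K := (16 * n)%:R^-1 * (1 + frame_coef s p q k).
Definition reject_weight s p q k : K := (16 * n)%:R^-1 * (1 - frame_coef s p q k).

Lemma frame_op_accept s :
  frame_op (accept_weight s) =
  (16 * n)%:R^-1%:C%C *: ((8 * n)%:R%:M + frame_op (frame_coef s)).
Proof. by rewrite frame_opZ frame_opD frame_op_const mulr1 rmorph_nat. Qed.

Lemma frame_op_reject s :
  frame_op (reject_weight s) =
  (16 * n)%:R^-1%:C%C *: ((8 * n)%:R%:M - frame_op (frame_coef s)).
Proof. by rewrite frame_opZ frame_opD frame_opN frame_op_const mulr1 rmorph_nat. Qed.

Lemma frame_op_accept_reject s : (0 < n)%N ->
  frame_op (accept_weight s) + frame_op (reject_weight s) = 1%:M.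
Proof.
move=> n_gt0; rewrite frame_op_accept frame_op_reject -scalerDr addrACA subrr addr0.
rewrite -raddfD /= scale_scalar_mx fmorphV rmorph_nat -natrD -mulnDl.
by rewrite mulVf // pnatr_eq0 muln_eq0 -lt0n n_gt0.
Qed.

Lemma signed_indicator_bound T p q : -1 <= signed_indicator T p q <= 1.
Proof. by rewrite /signed_indicator; case: ifP => _; apply/andP; split; lra. Qed.

Lemma accept_weight_ge0 T p q k : 0 <= accept_weight (signed_indicator T) p q k.
Proof.
have /andP[? ?] := frame_coef_bound p q k (signed_indicator_bound T).
by rewrite /accept_weight mulr_ge0 ?invr_ge0 ?ler0n //; lra.
Qed.

Lemma reject_weight_ge0 T p q k : 0 <= reject_weight (signed_indicator T) p q k.
Proof.
have /andP[? ?] := frame_coef_bound p q k (signed_indicator_bound T).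
by rewrite /reject_weight mulr_ge0 ?invr_ge0 ?ler0n //; lra.
Qed.

Definition accept_prob T x : C :=
  (adj_mx (letter_state x) *m frame_op (accept_weight (signed_indicator T))
     *m letter_state x) 0 0.

Lemma accept_probE T x : (0 < n)%N ->
  accept_prob T x = 2^-1 + ((16 * n)%:R^-1 * signed_indicator T x.1 x.2)%:C%C.
Proof.
move=> n_gt0; rewrite /accept_prob frame_op_accept -scalemxAr -scalemxAl mxE.
rewrite mulmxDr mulmxDl mxE mul_mx_scalar -scalemxAl letter_state_unit quad_letter_state.
rewrite !mxE eqxx mulr1n mulr1.
have n_neq0 : (n%:R : C) != 0 by rewrite pnatr_eq0 -lt0n.
by rewrite rmorphM fmorphV !rmorph_nat !natrM; field.
Qed.

Lemma half_lt_accept_prob T x : (0 < n)%N -> (2^-1 < accept_prob T x) = (x \in T).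
Proof.
move=> n_gt0; rewrite accept_probE // ltrDl -(rmorph0 (real_complex K)) ltcR.
rewrite pmulr_rgt0 ?invr_gt0 ?ltr0n ?muln_gt0 // /signed_indicator.
by rewrite -surjective_pairing; case: (x \in T); rewrite ?ltr01 // oppr_gt0 ltr10.
Qed.

End Frame.

(** * The witness automaton *)

Section Witness.
Variable m : nat.
Local Notation n := m.+2.

Definition witness_letter : finType := ('I_n * 'I_n + {set 'I_n * 'I_n})%type.

Definition witness_ops (l : witness_letter) : seq 'M[complex R]_n :=
  match l with
  | inl x => prepare_ops (letter_state x)
  | inr T => measure_ops ord0 ord_max (scaled_frame (accept_weight (signed_indicator R T)))
                                      (scaled_frame (reject_weight (signed_indicator R T)))
  end.

Definition witness_qfa : QFA witness_letter n :=
  MkQFA (ket_proj ord0) witness_ops (ket_proj ord0).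

Lemma witness_qfa_is_1gQFA : is_1gQFA witness_qfa.
Proof.
split.
  by split; [split; [exact: adj_ket_proj | exact: ket_proj_psd] | exact: ket_proj_trace].
split; last by split; [exact: adj_ket_proj | exact: ket_proj_idem].
case=> [x|T]; first exact/prepare_ops_TP/letter_state_unit.
apply: measure_ops_TP; rewrite !sum_scaled_frame.
- exact: frame_op_accept_reject.
- exact: reject_weight_ge0.
- exact: accept_weight_ge0.
Qed.

Lemma witness_qfa_prob x T : qfa_prob witness_qfa [:: inl x; inr T] = accept_prob R T x.
Proof.
have prepared : qfa_state witness_qfa [:: inl x] = letter_state x *m adj_mx (letter_state x).
  exact: prepare_ops_apply.
transitivity (\tr (ket_proj ord0 *m \sum_(K <- witness_ops (inr T))
                      K *m qfa_state witness_qfa [:: inl x] *m adj_mx K)) => //.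
rewrite prepared measure_ops_accept // sum_scaled_frame; last exact: accept_weight_ge0.
by rewrite mulmxA mxtrace_mulC mulmxA trace_mx11.
Qed.

Lemma witness_qfa_lang x T : qfa_lang witness_qfa (2%:R)^-1 [:: inl x; inr T] = (x \in T).
Proof. by rewrite /qfa_lang witness_qfa_prob half_lt_accept_prob. Qed.

End Witness.

Theorem theorem4p1 :
  forall n : nat, (2 <= n)%N ->
  exists (S : finType) (Q : QFA S n),
    is_1gQFA Q /\
    forall (k : nat) (P : PFA S k),
      is_PFA P ->
      (exists mu : R, 0 <= mu < 1 /\
         forall w : seq S, pfa_lang P mu w = qfa_lang Q (2%:R)^-1 w) ->
      (n ^ 2 - 1 <= k)%N.
Proof.
case=> [|[|m]] // _.
exists (witness_letter m), (witness_qfa m); split; first exact: witness_qfa_is_1gQFA.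
move=> k P P_pfa [mu [_ same_lang]].
have separates T x : pfa_lang P mu [:: inl x; inr T] = (x \in T).
  by rewrite same_lang witness_qfa_lang.
have := pfa_pair_separation_card_leq P_pfa separates.
by rewrite card_prod card_ord mulnn; apply: leq_trans; rewrite leq_subr.
Qed.
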